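(* Let $A$ be a finite subset of $\mathbb{R}^n$. The following are equivalent: (i) $A$ is a spectral set; (ii) there exists a continuous function $c:\mathbb{R}^n\to\mathbb{C}$ such that $c(a'-a)=\delta_{aa'}$ for all $a,a'\in A$ (Kronecker delta), $c(-t)=\overline{c(t)}$ for all $t\in\mathbb{R}^n$, and $c(u_1-u_2)=\sum_{a\in A}c(u_1+a)\overline{c(u_2+a)}$ for all $u_1,u_2\in\mathbb{R}^n$.
   Context: For $\lambda,x\in\mathbb{R}^n$ let $e_\lambda(x)=e^{2\pi i\lambda\cdot x}$. For a finite set $A\subset\mathbb{R}^n$ with $N=\#A$, let $\delta_A=\frac1N\sum_{a\in A}\delta_a$. $A$ is called spectral if there is $\Lambda\subset\mathbb{R}^n$ such that $\{e_\lambda|_A\}_{\lambda\in\Lambda}$ is an orthogonal basis of $L^2(\delta_A)$. *)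

From HB Require Import structures.
From mathcomp Require Import all_boot all_order all_algebra finmap.
From mathcomp Require Import all_classical all_reals all_analysis.
From mathcomp.real_closed Require Import complex.
Import numFieldNormedType.Exports.
Set Implicit Arguments. Unset Strict Implicit. Unset Printing Implicit Defensive.
Import Order.TTheory GRing.Theory Num.Theory.
Local Open Scope ring_scope.

(* The complex numbers over R, packed as a numClosedFieldType so that
   MathComp-Analysis equips them with their norm topology. *)
Definition CC (R : rcfType) : numClosedFieldType := R[i].

Definition dotv (R : realType) (n : nat) (l x : 'rV[R]_n) : R :=
  \sum_(i < n) l ord0 i * x ord0 i.

(* e_lambda(x) = exp(2 pi i lambda.x) = cos(2 pi lambda.x) + i sin(2 pi lambda.x) *)
Definition e_ (R : realType) (n : nat) (l : 'rV[R]_n) (x : 'rV[R]_n) : CC R :=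
  Complex (cos (2 * pi * dotv l x)) (sin (2 * pi * dotv l x)).

(* Inner product of L^2(delta_A), delta_A = (1/N) sum_{a in A} delta_a,
   functions on A being represented by functions on R^n (restricted to A). *)
Definition L2dot (R : realType) (n : nat) (A : {fset 'rV[R]_n})
  (f g : 'rV[R]_n -> CC R) : CC R :=
  (#|` A|%:R)^-1 * \sum_(a <- A) f a * (g a)^*.

(* A is spectral: there is Lambda in R^n such that {e_lambda|_A}_{lambda in Lambda}
   is an orthogonal basis of L^2(delta_A): the vectors are nonzero, pairwise
   orthogonal (for distinct indices), and span L^2(delta_A) (every function on A
   is a finite linear combination of them). *)
Definition spectral (R : realType) (n : nat) (A : {fset 'rV[R]_n}) : Prop :=
  exists Lambda : set 'rV[R]_n,
    (forall l, Lambda l -> L2dot A (e_ l) (e_ l) != 0) /\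
    (forall l l', Lambda l -> Lambda l' -> l != l' -> L2dot A (e_ l) (e_ l') = 0) /\
    (forall f : 'rV[R]_n -> CC R,
       exists (s : seq 'rV[R]_n) (coef : 'rV[R]_n -> CC R),
         (forall l, l \in s -> Lambda l) /\
         (forall a, a \in A -> f a = \sum_(l <- s) coef l * e_ l a)).

From HB Require Import structures.
From mathcomp Require Import all_boot all_order all_algebra finmap.
From mathcomp Require Import all_classical all_reals all_analysis.
From mathcomp.real_closed Require Import complex.
From mathcomp Require Import ring lra sesquilinear spectral.
Import numFieldNormedType.Exports.
Import Order.TTheory GRing.Theory Num.Theory.
Set Implicit Arguments. Unset Strict Implicit. Unset Printing Implicit Defensive.
Local Open Scope ring_scope.

(* (i) -> (ii): for an orthogonal basis {e_l}_(l in Lambda) of L^2(delta_A), the kernel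
   c = N^-1 sum_(l in Lambda) e_l works: c(a' - a) = delta_(a a') is the expansion of
   the indicator of a in the basis, and the convolution identity follows from the
   orthogonality relations sum_(a in A) e_l(a) e_m(a)^* = N delta_(l m).
   (ii) -> (i): enumerate A as a_1, ..., a_N and let M(t) = (c(t + a_j - a_i))_(i j).
   The convolution identity reads M(s + t) = M(s) M(t), conjugate symmetry reads
   M(t)^* = M(-t), and every M(t) is a combination of the commuting matrices M(-a_k).
   A unitary P simultaneously triangularising the M(-a_k) thus makes every
   P M(t) P^* triangular with triangular adjoint, i.e. diagonal; its diagonal entries
   are continuous unitary characters of R^n, i.e. exponentials e_(l_j).  Comparing
   both sides of P M(t) = D(t) P shows that row j of P is proportional to
   (e_(l_j)(a_i))_i, so the unitarity of P makes {e_(l_j)}_j an orthogonal basis. *)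

Lemma continuous_sumr (V : topologicalZmodType) (T : topologicalType)
    (I : Type) (r : seq I) (F : I -> T -> V) :
  (forall i, continuous (F i)) -> continuous (fun x => \sum_(i <- r) F i x).
Proof.
by move=> F_cont x; apply: (continuous_big add_continuous) => i _; exact: F_cont.
Qed.

Section Cis.
Variable R : realType.
Implicit Types s t : R.

Definition cis t : CC R := Complex (cos t) (sin t).

Lemma cisD s t : cis (s + t) = cis s * cis t.
Proof.
rewrite /cis cosD sinD.
by apply/eqP; rewrite eq_complex /=; apply/andP; split; apply/eqP; lra.
Qed.

Lemma cisN t : cis (- t) = (cis t)^*.
Proof. by rewrite /cis cosN sinN. Qed.

Lemma cis0 : cis 0 = 1.
Proof. by rewrite /cis cos0 sin0. Qed.

Lemma continuous_RtoC : continuous (fun t : R => (t%:C)%C : CC R).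
Proof.
move=> s; apply/cvgrPdist_lt => eps eps0.
have Re_eps0 : 0 < complex.Re eps by move: eps0; rewrite ltcE => /andP[].
have : \forall t \near s, `|s - t| < complex.Re eps.
  by apply: (@cvgr_dist_lt _ R _ (nbhs s) _ id) => //; exact: cvg_id.
apply: filterS => t st_lt.
rewrite -rmorphB normc_def /= expr0n /= addr0 sqrtr_sqr ltcE /=.
by move: eps0; rewrite ltcE => /andP[/eqP -> _]; rewrite eqxx.
Qed.

Lemma continuous_Complex (T : topologicalType) (f g : T -> R) :
  continuous f -> continuous g -> continuous (fun x => Complex (f x) (g x) : CC R).
Proof.
move=> f_cont g_cont.
have -> : (fun x => Complex (f x) (g x) : CC R) =
    (fun x => ((f x)%:C)%C + 'i * ((g x)%:C)%C).
  apply: funext => x; apply/eqP; rewrite eq_complex /=.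
  by apply/andP; split; apply/eqP; lra.
have RtoC_comp (h : T -> R) : continuous h -> continuous (fun x => ((h x)%:C)%C : CC R).
  by move=> h_cont x; apply: continuous_comp; [exact: h_cont | exact: continuous_RtoC].
move=> x; apply: cvgD; first exact: RtoC_comp.
by apply: cvgM; [exact: cvg_cst | exact: RtoC_comp].
Qed.

Lemma continuous_cis : continuous cis.
Proof. by apply: continuous_Complex => t; [exact: continuous_cos | exact: continuous_sin]. Qed.

End Cis.

Section Exponentials.
Variables (R : realType) (n : nat).
Implicit Types (l x y : 'rV[R]_n).

Lemma dotvD l x y : dotv l (x + y) = dotv l x + dotv l y.
Proof. by rewrite /dotv -big_split; apply: eq_bigr => i _; rewrite mxE mulrDr. Qed.

Lemma dotvN l x : dotv l (- x) = - dotv l x.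
Proof. by rewrite /dotv -sumrN; apply: eq_bigr => i _; rewrite mxE mulrN. Qed.

Lemma dotv_delta l (t : R) (i : 'I_n) : dotv l (t *: delta_mx 0 i) = l 0 i * t.
Proof.
rewrite /dotv (bigD1 i) //= big1 ?addr0 => [|j ji]; rewrite !mxE eqxx ?mulr1 //.
by rewrite (negbTE ji) mulr0 mulr0.
Qed.

Lemma e_D l x y : e_ l (x + y) = e_ l x * e_ l y.
Proof. by rewrite /e_ dotvD mulrDr; exact: cisD. Qed.

Lemma e_N l x : e_ l (- x) = (e_ l x)^*.
Proof. by rewrite /e_ dotvN mulrN; exact: cisN. Qed.

Lemma e_0 l : e_ l 0 = 1.
Proof.
rewrite /e_ /dotv big1 => [|i _]; last by rewrite mxE mulr0.
by rewrite mulr0; exact: cis0.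
Qed.

Lemma e_B l x y : e_ l (x - y) = e_ l x * (e_ l y)^*.
Proof. by rewrite e_D e_N. Qed.

Lemma e_mulJ l x : e_ l x * (e_ l x)^* = 1.
Proof. by rewrite -e_B subrr e_0. Qed.

Lemma continuous_dotv l : continuous (dotv l).
Proof.
apply: continuous_sumr => i x.
by apply: continuousM; [exact: cst_continuous | exact: coord_continuous].
Qed.

Lemma continuous_e l : continuous (e_ l).
Proof.
move=> x; apply: (@continuous_comp _ _ _ (fun x => 2 * pi * dotv l x) (@cis R));
  last exact: continuous_cis.
by apply: continuousM; [exact: cst_continuous | exact: continuous_dotv].
Qed.

End Exponentials.

Section Characters.
Variables (R : realType) (V : zmodType) (phi : V -> CC R).
Hypothesis phiD : {morph phi : x y / x + y >-> x * y}.
Hypothesis phi_unit : forall x, phi x * (phi x)^* = 1.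

Lemma char_neq0 x : phi x != 0.
Proof. by apply: contra_eq_neq (phi_unit x) => ->; rewrite mul0r eq_sym oner_neq0. Qed.

Lemma char0 : phi 0 = 1.
Proof. by apply: (mulfI (char_neq0 0)); rewrite -phiD !addr0 mulr1. Qed.

Lemma charN x : phi (- x) = (phi x)^-1.
Proof. by apply: (mulIf (char_neq0 x)); rewrite -phiD addNr char0 mulVf ?char_neq0. Qed.

Lemma char_mulz x (z : int) : phi (x *~ z) = phi x ^ z.
Proof.
have phi_mulrn m : phi (x *+ m) = phi x ^+ m.
  by elim: m => [|m IHm]; rewrite ?mulr0n ?char0 // mulrS phiD IHm exprS.
case: z => m; first by rewrite -pmulrn phi_mulrn.
by rewrite NegzE mulrNz charN -pmulrn phi_mulrn -invr_expz.
Qed.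

End Characters.

Section CharactersOfR.
Variable R : realType.

Lemma sqr_eq_Re (w1 w2 : CC R) :
  w1 ^+ 2 = w2 ^+ 2 -> 0 < complex.Re w1 -> 0 < complex.Re w2 -> w1 = w2.
Proof.
move=> sqr_eq Re1 Re2; have : (w1 - w2) * (w1 + w2) = 0.
  by rewrite mulrDr !mulrBl -!expr2 sqr_eq (mulrC w2 w1); ring.
move/eqP; rewrite mulf_eq0 subr_eq0 addr_eq0 => /orP[/eqP //|/eqP w12].
by move: Re1 Re2; rewrite w12; case: w2 {sqr_eq w12} => a b /= ? ?; exfalso; lra.
Qed.

Lemma Re_gt0_near1 (w : CC R) : `|1 - w| < 1 -> 0 < complex.Re w.
Proof.
case: w => a b; rewrite normc_def ltcE /= => /andP[_].
rewrite -[X in _ < X]sqrtr1 ltr_sqrt ?ltr01 // => lt1.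
have : (1 - a) ^+ 2 < 1 by rewrite expr2; nra.
by rewrite expr2 => ?; nra.
Qed.

Lemma unit_circle_cis (z : CC R) : z * z^* = 1 -> 0 < complex.Re z ->
  exists2 t, `|t| < pi / 2 & z = cis t.
Proof.
case: z => a b /eqP; rewrite eq_complex /= => /andP[/eqP ab1 _] a_gt0.
have a_neq0 : a != 0 by rewrite gt_eqF.
have [atan_lt tan_atan] := atan_def (b / a).
exists (atan (b / a)); first by rewrite ltr_norml.
have cos_atan_a : cos (atan (b / a)) = a.
  rewrite cos_atan; have -> : 1 + (b / a) ^+ 2 = a^-1 ^+ 2.
    have -> : 1 + (b / a) ^+ 2 = (a ^+ 2 + b ^+ 2) / a ^+ 2 by field.
    by rewrite exprVn [X in X / _](_ : _ = 1) ?mul1r // -ab1; ring.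
  by rewrite sqrtr_sqr ger0_norm ?invr_ge0 ?ltW // invrK.
have sin_atan_b : sin (atan (b / a)) = b.
  by move: tan_atan; rewrite /tan cos_atan_a => /(canRL (divfK a_neq0)) ->; rewrite divfK.
by rewrite /cis cos_atan_a sin_atan_b.
Qed.

Lemma norm_div2X_le (t : R) m : `|t / 2 ^+ m| <= `|t|.
Proof.
rewrite normrM ler_piMr // normfV ger0_norm ?exprn_ge0 //.
by rewrite invf_le1 ?exprn_gt0 // exprn_ege1 // ler1n.
Qed.

Lemma char_cis_dyadic (phi : R -> CC R) (d t : R) :
    {morph phi : x y / x + y >-> x * y} ->
    (forall m, 0 < complex.Re (phi (d / 2 ^+ m))) ->
    `|t| < pi / 2 -> phi d = cis t ->
  forall m, phi (d / 2 ^+ m) = cis (t / 2 ^+ m).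
Proof.
move=> phiD Re_gt0 t_lt phid; elim=> [|m IHm]; first by rewrite !expr0 !divr1.
have halve (x : R) : x / 2 ^+ m = x / 2 ^+ m.+1 + x / 2 ^+ m.+1.
  by rewrite exprS; field; rewrite expf_neq0 // pnatr_eq0.
apply: sqr_eq_Re; first by rewrite !expr2 -phiD -cisD -!halve.
  exact: Re_gt0.
apply: cos_gt0_pihalf; rewrite -ltr_norml.
exact: le_lt_trans (norm_div2X_le _ _) t_lt.
Qed.

Lemma continuous_dyadic_eq0 (f : R -> CC R) (d : R) : continuous f -> 0 < d ->
  (forall (m : nat) (z : int), f ((d / 2 ^+ m) *~ z) = 0) -> forall x, f x = 0.
Proof.
move=> f_cont d_gt0 f_dyadic x; apply/eqP/negPn/negP => fx_neq0.
have fx_gt0 : 0 < `|f x| by rewrite normr_gt0.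
have := f_cont x; move/cvgrPdist_lt => /(_ _ fx_gt0) /nbhs_ballP [e e_gt0 near_x].
pose K := Num.Def.archi_bound (d / e).
have d_lt : d / e < 2 ^+ K by apply: upper_nthrootP.
pose s := d / 2 ^+ K.
have s_gt0 : 0 < s by rewrite divr_gt0 ?exprn_gt0.
have s_lt_e : s < e by rewrite /s ltr_pdivrMr ?exprn_gt0 // mulrC -ltr_pdivrMr.
pose m := Num.Def.floor (x / s).
have /andP [m_le m_gt] := floor_itv (x / s).
have ms_le : s *~ m <= x by rewrite -mulrzr mulrC -ler_pdivlMr.
have ms_gt : x < s *~ m + s.
  rewrite -mulrzr -[X in _ + X]mulr1 -mulrDr mulrC -ltr_pdivrMr //.
  by move: m_gt; rewrite intrD.
have : `|f x - f (s *~ m)| < `|f x|.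
  by apply: near_x; rewrite /ball /= ger0_norm; lra.
by rewrite f_dyadic subr0 ltxx.
Qed.

(* Square roots with positive real part are unique, so [phi x] agrees with
   [cis (k * x)] on the dyadic multiples of a small [d], which are dense. *)
Lemma continuous_char_cis (phi : R -> CC R) : continuous phi ->
    {morph phi : x y / x + y >-> x * y} -> (forall x, phi x * (phi x)^* = 1) ->
  exists k, forall x, phi x = cis (k * x).
Proof.
move=> phi_cont phiD phi_unit.
have [del del_gt0 Re_gt0] : exists2 del : R, 0 < del &
    forall x, `|x| < del -> 0 < complex.Re (phi x).
  have := phi_cont 0; move/cvgrPdist_lt => /(_ 1 ltr01) /nbhs_ballP [e e_gt0 near0].
  exists e => // x x_lt; apply: Re_gt0_near1; rewrite -{1}(char0 phiD phi_unit).
  by apply: near0; rewrite /ball /= sub0r normrN.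
pose d := del / 2.
have d_gt0 : 0 < d by rewrite divr_gt0.
have Re_dyadic m : 0 < complex.Re (phi (d / 2 ^+ m)).
  apply: Re_gt0; apply: le_lt_trans (norm_div2X_le _ _) _.
  by rewrite gtr0_norm // /d; lra.
have [t t_lt phid] : exists2 t, `|t| < pi / 2 & phi d = cis t.
  by apply: unit_circle_cis; rewrite // -[d]divr1 -(expr0 2).
pose psi x := cis (t / d * x).
have psiD : {morph psi : x y / x + y >-> x * y} by move=> x y; rewrite /psi mulrDr cisD.
have psi_unit x : psi x * (psi x)^* = 1 by rewrite -cisN -cisD subrr cis0.
exists (t / d) => x; apply/eqP; rewrite -subr_eq0; apply/eqP; move: x.
apply: (continuous_dyadic_eq0 _ d_gt0) => [x|m z].
  have psi_cont : continuous psi.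
    move=> y; apply: (@continuous_comp _ _ _ (fun y => t / d * y) (@cis R));
      last exact: continuous_cis.
    by apply: continuousM; [exact: cst_continuous | exact: cvg_id].
  exact: continuousB (phi_cont x) (psi_cont x).
have := char_mulz psiD psi_unit (d / 2 ^+ m) z; rewrite /psi => ->.
rewrite (char_mulz phiD phi_unit) (char_cis_dyadic phiD Re_dyadic t_lt phid).
by rewrite mulrA divfK ?gt_eqF // subrr.
Qed.

End CharactersOfR.

Lemma continuous_char_e (R : realType) (n : nat) (chi : 'rV[R]_n -> CC R) :
    continuous chi -> {morph chi : x y / x + y >-> x * y} ->
    (forall x, chi x * (chi x)^* = 1) ->
  exists l, forall x, chi x = e_ l x.
Proof.
move=> chi_cont chiD chi_unit.
have axis i : exists k, forall t, chi (t *: delta_mx 0 i) = cis (k * t).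
  apply: continuous_char_cis => [t|s t|t]; last exact: chi_unit.
  - apply: continuous_comp; last exact: chi_cont.
    exact: (@continuousZr_tmp R _ R id (delta_mx 0 i) t cvg_id).
  - by rewrite scalerDl chiD.
have [k chi_axis] := boolp.choice axis.
exists (\row_i (k i / (2 * pi))) => x.
have pi2_neq0 : (2 * pi : R) != 0 by rewrite mulf_neq0 ?pnatr_eq0 ?gt_eqF ?pi_gt0.
rewrite [x]row_sum_delta (big_morph chi chiD (char0 chiD chi_unit)).
rewrite (big_morph _ (@e_D _ _ _) (@e_0 _ _ _)); apply: eq_bigr => i _.
by rewrite chi_axis /e_ dotv_delta mxE mulrA [_ * (k i / _)]mulrC mulfVK.
Qed.

Definition spectral_kernel (R : realType) (n : nat) (A : {fset 'rV[R]_n})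
    (c : 'rV[R]_n -> CC R) : Prop :=
  continuous c /\
  (forall a a', a \in A -> a' \in A -> c (a' - a) = (a == a')%:R) /\
  (forall t, c (- t) = (c t)^*) /\
  (forall u1 u2, c (u1 - u2) = \sum_(a <- A) c (u1 + a) * (c (u2 + a))^*).

Lemma sum_kronecker (T : eqType) (V : pzSemiRingType) (s : seq T) (F : T -> V) x :
  uniq s -> x \in s -> \sum_(y <- s) (x == y)%:R * F y = F x.
Proof.
move=> s_uniq xs; rewrite (bigD1_seq x) //= eqxx mul1r big1 ?addr0 // => y yx.
by rewrite eq_sym (negbTE yx) mul0r.
Qed.

Section SpectralToKernel.
Variables (R : realType) (n : nat) (A : {fset 'rV[R]_n}).
Local Notation N := #|` A|.

Lemma sum_e_mulJ l : \sum_(a <- A) e_ l a * (e_ l a)^* = N%:R.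
Proof.
rewrite (eq_bigr (fun=> 1)) => [|a _]; last exact: e_mulJ.
by rewrite (big_nth 0) big_mkord sumr_const card_ord.
Qed.

Lemma orthogonal_gram (Lambda : set 'rV[R]_n) :
    (forall l l', Lambda l -> Lambda l' -> l != l' -> L2dot A (e_ l) (e_ l') = 0) ->
  forall l m, Lambda l -> Lambda m ->
    \sum_(a <- A) e_ l a * (e_ m a)^* = N%:R * (l == m)%:R.
Proof.
move=> orth l m Ll Lm; have [<-|lm] := eqVneq l m; first by rewrite mulr1 sum_e_mulJ.
move: (orth _ _ Ll Lm lm); rewrite /L2dot mulr0 => /eqP.
rewrite mulf_eq0 invr_eq0 pnatr_eq0 => /orP[/eqP/size0nil A0|/eqP //].
by rewrite [in LHS]A0 big_nil.
Qed.

Lemma spectral_indicator_basis (Lambda : set 'rV[R]_n) :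
    (forall f : 'rV[R]_n -> CC R, exists (s : seq 'rV[R]_n) (coef : 'rV[R]_n -> CC R),
       (forall l, l \in s -> Lambda l) /\
       (forall a, a \in A -> f a = \sum_(l <- s) coef l * e_ l a)) ->
  exists S : seq 'rV[R]_n, [/\ uniq S, forall l, l \in S -> Lambda l &
    forall b, b \in A -> exists g : 'rV[R]_n -> CC R,
      forall a, a \in A -> (b == a)%:R = \sum_(m <- S) g m * e_ m a].
Proof.
move=> span.
have indicator b : exists p : seq 'rV[R]_n * ('rV[R]_n -> CC R),
    (forall l, l \in p.1 -> Lambda l) /\
    (forall a, a \in A -> (b == a)%:R = \sum_(l <- p.1) p.2 l * e_ l a).
  by have [s [coef [sL s_span]]] := span (fun a => (b == a)%:R); exists (s, coef).
have [p p_span] := boolp.choice indicator.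
pose S := undup (flatten [seq (p b).1 | b <- enum_fset A]).
exists S; split => [|l|b bA]; first exact: undup_uniq.
  by rewrite mem_undup => /flattenP [s /mapP [b _ ->]]; exact: (p_span b).1.
have [_ p_eq] := p_span b.
have pS l : l \in (p b).1 -> l \in S.
  move=> lp; rewrite mem_undup; apply/flattenP; exists (p b).1 => //.
  by apply/mapP; exists b.
exists (fun m => \sum_(l <- (p b).1) (l == m)%:R * (p b).2 l) => a aA.
rewrite p_eq //.
rewrite (eq_big_seq (fun l => \sum_(m <- S) (l == m)%:R * ((p b).2 l * e_ m a)));
  last by move=> l lp; rewrite sum_kronecker ?undup_uniq ?pS.
rewrite exchange_big /=; apply: eq_bigr => m _.
by rewrite mulr_suml; apply: eq_bigr => l _; rewrite mulrA.
Qed.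

End SpectralToKernel.

Section FourierKernel.
Variables (R : realType) (n : nat) (A : {fset 'rV[R]_n}) (S : seq 'rV[R]_n).
Local Notation N := #|` A|.
Hypothesis S_uniq : uniq S.
Hypothesis S_gram : forall l m, l \in S -> m \in S ->
  \sum_(a <- A) e_ l a * (e_ m a)^* = N%:R * (l == m)%:R.

Definition fourier_kernel (t : 'rV[R]_n) : CC R := N%:R^-1 * \sum_(m <- S) e_ m t.

Lemma continuous_fourier_kernel : continuous fourier_kernel.
Proof.
have sum_cont := continuous_sumr (r := S) (@continuous_e R n).
move=> t; apply: (@continuousM _ _ (fun=> N%:R^-1) (fun t => \sum_(m <- S) e_ m t)).
  exact: cst_continuous.
exact: sum_cont.
Qed.

Lemma fourier_kernelN t : fourier_kernel (- t) = (fourier_kernel t)^*.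
Proof.
rewrite /fourier_kernel rmorphM fmorphV rmorph_nat rmorph_sum.
by congr (_ * _); apply: eq_bigr => m _; rewrite e_N.
Qed.

Lemma fourier_kernel_conv u1 u2 : fourier_kernel (u1 - u2) =
  \sum_(a <- A) fourier_kernel (u1 + a) * (fourier_kernel (u2 + a))^*.
Proof.
have expand a : fourier_kernel (u1 + a) * (fourier_kernel (u2 + a))^* =
    N%:R^-1 * N%:R^-1 * \sum_(l <- S) \sum_(m <- S)
      e_ l u1 * (e_ m u2)^* * (e_ l a * (e_ m a)^*).
  rewrite /fourier_kernel rmorphM fmorphV rmorph_nat rmorph_sum mulrACA mulr_suml.
  congr (_ * _); apply: eq_bigr => l _; rewrite mulr_sumr; apply: eq_bigr => m _.
  by rewrite !e_D rmorphM; ring.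
(* [A] may be empty: then [0^-1 = 0] and both sides vanish. *)
have invNN : N%:R^-1 * N%:R^-1 * N%:R = N%:R^-1 :> CC R.
  by have [->|N_neq0] := eqVneq (N%:R : CC R) 0; rewrite ?invr0 ?mulr0 // mulfVK.
rewrite (eq_bigr _ (fun a _ => expand a)) -mulr_sumr exchange_big /=.
rewrite (eq_big_seq (fun l => N%:R * (e_ l u1 * (e_ l u2)^*))).
  by rewrite -mulr_sumr mulrA invNN /fourier_kernel; under eq_bigr do rewrite e_B.
move=> l lS; rewrite exchange_big /=.
rewrite (eq_big_seq (fun m => N%:R * ((l == m)%:R * (e_ l u1 * (e_ m u2)^*)))).
  by rewrite -mulr_sumr sum_kronecker.
by move=> m mS; rewrite -mulr_sumr S_gram //; ring.
Qed.

Hypothesis S_span : forall b, b \in A -> exists g : 'rV[R]_n -> CC R,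
  forall a, a \in A -> (b == a)%:R = \sum_(m <- S) g m * e_ m a.

Lemma fourier_kernel_kronecker a a' :
  a \in A -> a' \in A -> fourier_kernel (a' - a) = (a == a')%:R.
Proof.
move=> aA a'A; have [g g_span] := S_span aA.
have N_neq0 : N%:R != 0 :> CC R.
  by rewrite pnatr_eq0 cardfs_eq0; apply: contraTneq aA => ->.
have e_coef m : m \in S -> (e_ m a)^* = N%:R * g m.
  move=> mS; rewrite -(sum_kronecker (fun b => (e_ m b)^*) (fset_uniq A) aA).
  rewrite (eq_big_seq (fun b => \sum_(l <- S) g l * (e_ l b * (e_ m b)^*)));
    last by move=> b bA; rewrite g_span // mulr_suml; apply: eq_bigr => l _; rewrite mulrA.
  rewrite exchange_big /= (eq_big_seq (fun l => N%:R * ((m == l)%:R * g l))).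
    by rewrite -mulr_sumr sum_kronecker.
  by move=> l lS; rewrite -mulr_sumr S_gram // eq_sym; ring.
rewrite g_span // /fourier_kernel mulr_sumr; apply: eq_big_seq => m mS.
by rewrite e_B e_coef // mulrCA mulKf // mulrC.
Qed.

End FourierKernel.

Lemma spectral_kernel_exists (R : realType) (n : nat) (A : {fset 'rV[R]_n}) :
  spectral A -> exists c, spectral_kernel A c.
Proof.
move=> [Lambda [_ [orth span]]].
have [S [S_uniq S_Lambda S_span]] := spectral_indicator_basis span.
have S_gram l m : l \in S -> m \in S ->
    \sum_(a <- A) e_ l a * (e_ m a)^* = #|` A|%:R * (l == m)%:R.
  by move=> lS mS; apply: orthogonal_gram orth _ _ (S_Lambda l lS) (S_Lambda m mS).
exists (fourier_kernel A S); split; [|split; [|split]].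
- exact: continuous_fourier_kernel.
- exact: fourier_kernel_kronecker.
- exact: fourier_kernelN.
- exact: fourier_kernel_conv.
Qed.

Local Open Scope sesquilinear_scope.

Lemma trig_adj_diag (C : numClosedFieldType) m (T : 'M[C]_m) :
  is_trig_mx T -> is_trig_mx (T^t*) -> is_diag_mx T.
Proof.
move=> trigT /is_trig_mxP trigTa; rewrite is_diag_mxEtrig trigT.
apply/is_trig_mxP => i j ij; have /eqP := trigTa i j ij.
by rewrite !mxE conjC_eq0 => /eqP.
Qed.

Lemma continuous_mulmx_entry (K : numFieldType) (T : topologicalType) m
    (M : T -> 'M[K]_m) (X Y : 'M[K]_m) :
  (forall i j, continuous (fun t => M t i j)) ->
  forall i j, continuous (fun t => (X *m M t *m Y) i j).
Proof.
move=> M_cont i j.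
have -> : (fun t => (X *m M t *m Y) i j) =
    (fun t => \sum_(k < m) (\sum_(l < m) X i l * M t l k) * Y k j).
  by apply: funext => t; rewrite mxE; apply: eq_bigr => k _; rewrite mxE.
apply: continuous_sumr => k t.
apply: (@continuousM _ _ (fun t => \sum_(l < m) X i l * M t l k) (fun=> Y k j));
  last exact: cst_continuous.
apply: continuous_sumr => l {}t.
apply: (@continuousM _ _ (fun=> X i l) (fun t => M t l k)); first exact: cst_continuous.
exact: M_cont.
Qed.

Section KernelToSpectral.
Variables (R : realType) (n : nat) (A : {fset 'rV[R]_n}) (c : 'rV[R]_n -> CC R).
Hypothesis c_cont : continuous c.
Hypothesis c_kron : forall a a', a \in A -> a' \in A -> c (a' - a) = (a == a')%:R.
Hypothesis c_conj : forall t, c (- t) = (c t)^*.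
Hypothesis c_conv : forall u1 u2,
  c (u1 - u2) = \sum_(a <- A) c (u1 + a) * (c (u2 + a))^*.
Local Notation N := #|` A|.

Definition pt (i : 'I_N) : 'rV[R]_n := nth 0 (enum_fset A) i.

Lemma pt_in i : pt i \in A.
Proof. exact: mem_nth. Qed.

Lemma pt_inj : injective pt.
Proof. by move=> i j /eqP; rewrite nth_uniq ?fset_uniq // => /eqP /val_inj. Qed.

Lemma pt_surj a : a \in A -> exists i, a = pt i.
Proof.
move=> aA; have aN : (index a A < N)%N by rewrite index_mem.
by exists (Ordinal aN); rewrite /pt nth_index.
Qed.

Lemma big_fset_pt (F : 'rV[R]_n -> CC R) : \sum_(a <- A) F a = \sum_(i < N) F (pt i).
Proof. by rewrite (big_nth 0) big_mkord. Qed.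

Lemma c_pt i j : c (pt j - pt i) = (i == j)%:R.
Proof. by rewrite c_kron ?pt_in // (inj_eq pt_inj). Qed.

Lemma c_conv_pt x y : \sum_(i < N) c (x + pt i) * c (y - pt i) = c (x + y).
Proof.
rewrite -[y]opprK c_conv big_fset_pt; apply: eq_bigr => i _.
by rewrite -c_conj opprD opprK addrC.
Qed.

Definition shiftmx t : 'M[CC R]_N := \matrix_(i, j) c (t + pt j - pt i).

Lemma shiftmxD s t : shiftmx (s + t) = shiftmx s *m shiftmx t.
Proof.
apply/matrixP => i j; rewrite !mxE.
rewrite (eq_bigr (fun k => c ((s - pt i) + pt k) * c ((t + pt j) - pt k)));
  last by move=> k _; rewrite !mxE addrAC.
by rewrite c_conv_pt; congr c; rewrite addrAC -!addrA; congr (_ + _); rewrite addrCA.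
Qed.

Lemma shiftmx0 : shiftmx 0 = 1%:M.
Proof. by apply/matrixP => i j; rewrite !mxE add0r c_pt. Qed.

Lemma shiftmx_adj t : (shiftmx t)^t* = shiftmx (- t).
Proof.
apply/matrixP => i j; rewrite !mxE -c_conj; congr c.
by rewrite opprB opprD addrA [pt j - t]addrC.
Qed.

Lemma shiftmx_span t : shiftmx t = \sum_(k < N) c (t + pt k) *: shiftmx (- pt k).
Proof.
apply/matrixP => i j; rewrite !mxE summxE -addrA -c_conv_pt.
by apply: eq_bigr => k _; rewrite !mxE addrAC [- pt k + _]addrC.
Qed.

Lemma continuous_shiftmx i j : continuous (fun t => shiftmx t i j).
Proof.
have -> : (fun t => shiftmx t i j) = (fun t => c (t + (pt j - pt i))).
  by apply: funext => t; rewrite mxE addrA.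
move=> t; apply: continuous_comp; last exact: c_cont.
have id_cont : {for t, continuous (fun s : 'rV[R]_n => s)} by exact: cvg_id.
exact: continuousD id_cont (@cst_continuous _ 'rV[R]_n (pt j - pt i) t).
Qed.

Lemma shiftmx_codiag : exists2 P : 'M[CC R]_N, P \is unitarymx &
  forall t, is_diag_mx (P *m shiftmx t *m P^t*).
Proof.
have gens_comm : {in [seq shiftmx (- pt k) | k <- enum 'I_N] &, forall X Y, comm_mx X Y}.
  by move=> _ _ /mapP [k _ ->] /mapP [l _ ->]; rewrite /comm_mx -!shiftmxD addrC.
have [P P_unitary /allP P_trig] := cotrigonalization gens_comm.
have trig t : is_trig_mx (P *m shiftmx t *m P^t*).
  rewrite shiftmx_span mulmx_sumr mulmx_suml; apply/is_trig_mxP => i j ij.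
  rewrite summxE big1 // => k _; rewrite -scalemxAr -scalemxAl mxE.
  have := P_trig _ (map_f _ (mem_enum _ k)).
  by rewrite /= /similar_to conjymx // => /is_trig_mxP -> //; rewrite mulr0.
exists P => // t; apply: trig_adj_diag (trig t) _.
by rewrite !trmx_mul !map_mxM trmxCK shiftmx_adj mulmxA.
Qed.

Lemma shiftmx_diag_char (P : 'M[CC R]_N) : P \is unitarymx ->
    (forall t, is_diag_mx (P *m shiftmx t *m P^t*)) ->
  exists lam : 'I_N -> 'rV[R]_n,
    forall j t, (P *m shiftmx t *m P^t*) j j = e_ (lam j) t.
Proof.
move=> P_unitary P_diag; pose D t := P *m shiftmx t *m P^t*.
have DD s t : D (s + t) = D s *m D t.
  by rewrite /D shiftmxD !mulmxA mulmxKtV.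
have D0 : D 0 = 1%:M by rewrite /D shiftmx0 mulmx1 (unitarymxP P_unitary).
have Dadj t : (D t)^t* = D (- t).
  by rewrite /D !trmx_mul !map_mxM trmxCK shiftmx_adj mulmxA.
have chiD j : {morph (fun t => D t j j) : s t / s + t >-> s * t}.
  move=> s t; rewrite DD mxE (bigD1 j) //= big1 ?addr0 // => k kj.
  by rewrite (is_diag_mxP (P_diag s)) ?mul0r // val_eqE eq_sym.
have chi_unit j t : D t j j * (D t j j)^* = 1.
  have -> : (D t j j)^* = D (- t) j j by rewrite -Dadj !mxE.
  by rewrite -chiD subrr D0 mxE eqxx.
have chi_cont j : continuous (fun t => D t j j).
  exact: (@continuous_mulmx_entry _ _ _ shiftmx P (P^t*) continuous_shiftmx j j).
have [lam lamP] := boolp.choice (fun j =>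
  continuous_char_e (chi_cont j) (chiD j) (chi_unit j)).
by exists lam.
Qed.

Lemma unitary_char_rows : exists2 P : 'M[CC R]_N, P \is unitarymx &
  exists lam : 'I_N -> 'rV[R]_n,
    forall j i i', P j i = e_ (lam j) (pt i - pt i') * P j i'.
Proof.
have [P P_unitary P_diag] := shiftmx_codiag.
have [lam lamP] := shiftmx_diag_char P_unitary P_diag.
exists P => //; exists lam => j i i'.
have row t k : \sum_(b < N) P j b * shiftmx t b k = e_ (lam j) t * P j k.
  have := congr1 (fun X : 'M[CC R]_N => X j k) (mulmxKtV (P *m shiftmx t) P_unitary erefl).
  rewrite [in RHS]mxE => <-; rewrite mxE (bigD1 j) //= lamP big1 ?addr0 // => b bj.
  by rewrite (is_diag_mxP (P_diag t)) ?mul0r // val_eqE eq_sym.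
rewrite -[P j i]mul1r -(e_0 (lam j)) -(row 0 i) -(row (pt i - pt i') i').
by apply: eq_bigr => b _; rewrite !mxE add0r subrK.
Qed.

Lemma L2dot_pt (f g : 'rV[R]_n -> CC R) :
  L2dot A f g = N%:R^-1 * \sum_(i < N) f (pt i) * (g (pt i))^*.
Proof. by rewrite /L2dot big_fset_pt. Qed.

Lemma exponential_basis_pt : exists lam : 'I_N -> 'rV[R]_n,
  (forall j k, \sum_(i < N) e_ (lam j) (pt i) * (e_ (lam k) (pt i))^* =
     N%:R * (j == k)%:R) /\
  (forall f : 'rV[R]_n -> CC R, exists d : 'I_N -> CC R,
     forall i, f (pt i) = \sum_(j < N) d j * e_ (lam j) (pt i)).
Proof.
have [P P_unitary [lam P_row]] := unitary_char_rows.
pose w j := (e_ (lam j) (pt j))^* * P j j.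
have P_e j i : P j i = e_ (lam j) (pt i) * w j by rewrite (P_row j i j) e_B mulrA.
pose G j k := \sum_(i < N) e_ (lam j) (pt i) * (e_ (lam k) (pt i))^*.
have wwG j k : w j * (w k)^* * G j k = (j == k)%:R.
  have := congr1 (fun X : 'M[CC R]_N => X j k) (unitarymxP P_unitary).
  rewrite !mxE => <-; rewrite /G mulr_sumr; apply: eq_bigr => i _.
  by rewrite !mxE !P_e [in RHS]rmorphM; ring.
have w_neq0 j : w j != 0.
  apply/eqP => w0; have := wwG j j; rewrite w0 !mul0r eqxx => /eqP.
  by rewrite eq_sym oner_eq0.
exists lam; split=> [j k|f].
  rewrite -/(G j k); have [<-|jk] := eqVneq j k.
    by rewrite /G -(big_fset_pt (fun a => e_ (lam j) a * (e_ (lam j) a)^*)) sum_e_mulJ mulr1.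
  have ww_neq0 : w j * (w k)^* != 0 by rewrite mulf_neq0 ?conjC_eq0 ?w_neq0.
  by apply: (mulfI ww_neq0); rewrite wwG (negbTE jk) !mulr0.
pose v := \row_b f (pt b).
exists (fun j => (\sum_(b < N) f (pt b) * (P j b)^*) * w j) => i.
have := congr1 (fun X : 'rV[CC R]_N => X 0 i) (mulmxKtV v P_unitary erefl).
rewrite [in RHS]mxE => <-; rewrite !mxE; apply: eq_bigr => j _.
rewrite (P_e j i) mxE; under eq_bigr do rewrite !mxE.
by rewrite mulrCA mulrC.
Qed.

Lemma spectral_of_kernel : spectral A.
Proof.
have [lam [gram span]] := exponential_basis_pt.
have N_neq0 (j : 'I_N) : N%:R != 0 :> CC R.
  by rewrite pnatr_eq0 -lt0n (leq_ltn_trans _ (ltn_ord j)).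
have lam_inj : injective lam.
  move=> j k ljk; have := gram j k; rewrite ljk gram eqxx => /(mulfI (N_neq0 j)).
  by case: eqP => // _ /eqP; rewrite eqr_nat.
exists (fun l => exists j, l = lam j); split; [|split].
- by move=> _ [j ->]; rewrite L2dot_pt gram eqxx mulr1 mulVf ?oner_neq0 ?(N_neq0 j).
- move=> _ _ [j ->] [k ->] ljk; rewrite L2dot_pt gram (_ : (j == k) = false) ?mulr0 //.
  by apply: contraNF ljk => /eqP ->.
move=> f; have [d f_d] := span f.
exists [seq lam j | j <- enum 'I_N], (fun l => \sum_(k < N) (l == lam k)%:R * d k).
split=> [_ /mapP [j _ ->]|_ /pt_surj [i ->]]; first by exists j.
rewrite big_map big_enum /= f_d; apply: eq_bigr => j _; congr (_ * _).
under eq_bigr do rewrite (inj_eq lam_inj).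
by rewrite sum_kronecker ?index_enum_uniq ?mem_index_enum.
Qed.

End KernelToSpectral.

Theorem theorem2p7 (R : realType) (n : nat) (A : {fset 'rV[R]_n}) :
  spectral A <->
  exists c : 'rV[R]_n -> CC R,
    continuous c /\
    (forall a a', a \in A -> a' \in A -> c (a' - a) = (a == a')%:R) /\
    (forall t, c (- t) = (c t)^*) /\
    (forall u1 u2, c (u1 - u2) = \sum_(a <- A) c (u1 + a) * (c (u2 + a))^*).
Proof.
split; first exact: spectral_kernel_exists.
by case=> c [c_cont [c_kron [c_conj c_conv]]]; exact: spectral_of_kernel c_cont c_kron c_conj c_conv.
Qed.
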